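(* Let $F$ be a finite-dimensional Freudenthal triple system over $\Bbbk\in\{\mathbb{R},\mathbb{C}\}$ with antisymmetric bilinear form $\langle\cdot,\cdot\rangle$. For $a,b\in F$ define polynomial maps $F\oplus\Bbbk\to F\oplus\Bbbk$ by (for $z\in F$, $\zeta\in\Bbbk$; scalar-valued terms lie in the $\Bbbk$ component): $K_{ab}(z+\zeta)=2\langle a,b\rangle$, $U_a(z+\zeta)=a+\langle a,z\rangle$, $S_{ab}(z+\zeta)=(abz)-\zeta\langle a,b\rangle$, $\tilde U_a(z+\zeta)=-\tfrac12(zaz)-\tfrac12\zeta a+\tfrac16\langle (zzz),a\rangle-\tfrac12\zeta\langle a,z\rangle$, $\tilde K_{ab}(z+\zeta)=\tfrac16\langle a,b\rangle(zzz)+\tfrac12\zeta\langle a,b\rangle z-\tfrac1{12}\langle a,b\rangle\langle (zzz),z\rangle+\tfrac12\zeta^2\langle a,b\rangle$. Then their linear span is a Lie algebra under $[f,g](p)=Df(p)(g(p))-Dg(p)(f(p))$, and for all $a,b,c,d\in F$: $[S_{ab},S_{cd}]=S_{(abc)d}+S_{c(bad)}$, $[S_{ab},U_c]=U_{(abc)}$, $[S_{ab},K_{cd}]=\langle c,d\rangle K_{ba}$, $[U_a,U_b]=K_{ab}$, $[S_{ab},\tilde U_c]=\tilde U_{(bac)}$, $[S_{ab},\tilde K_{cd}]=\langle c,d\rangle\tilde K_{ab}$, $[U_a,\tilde U_b]=S_{ab}$, $[U_a,\tilde K_{cd}]=\langle c,d\rangle\tilde U_a$, $[K_{ab},\tilde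 U_c]=\langle a,b\rangle U_c$, $[K_{ab},\tilde K_{cd}]=\langle a,b\rangle(S_{cd}-S_{dc})$, $[\tilde U_a,\tilde U_b]=\tilde K_{ab}$, $[\tilde K_{ab},\tilde K_{cd}]=[\tilde K_{ab},\tilde U_c]=0$.
   Context: A Freudenthal triple system (FTS) is a vector space $F$ over $\Bbbk$ with a trilinear product $(xyz)$ and an antisymmetric bilinear form $\langle\cdot,\cdot\rangle:F\times F\to\Bbbk$ such that for all $u,v,x,y,z\in F$: $(uv(xyz))=((uvx)yz)+(x(vuy)z)+(xy(uvz))$; $\langle x,y\rangle z=(xzy)-(yzx)=(yxz)-(xyz)$; $\langle u,v\rangle\langle x,y\rangle=\langle (yxu),v\rangle-\langle (yxv),u\rangle$. $Df(p)$ is the derivative of the polynomial map $f$ at $p$. *)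

From HB Require Import structures.
From mathcomp Require Import all_boot all_order all_algebra.
From Stdlib Require Import ClassicalEpsilon.
Set Implicit Arguments. Unset Strict Implicit. Unset Printing Implicit Defensive.
Import Order.TTheory GRing.Theory Num.Theory.
Local Open Scope ring_scope.

Definition is_FTS (k : numFieldType) (F : vectType k)
    (t : F -> F -> F -> F) (w : F -> F -> k) : Prop :=
  (forall (a : k) (x y u v : F), t (a *: x + y) u v = a *: t x u v + t y u v) /\
  (forall (a : k) (x y u v : F), t u (a *: x + y) v = a *: t u x v + t u y v) /\
  (forall (a : k) (x y u v : F), t u v (a *: x + y) = a *: t u v x + t u v y) /\
  (forall (a : k) (x y u : F), w (a *: x + y) u = a * w x u + w y u) /\
  (forall (a : k) (x y u : F), w u (a *: x + y) = a * w u x + w u y) /\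
  (forall x y : F, w x y = - w y x) /\
  (forall u v x y z : F,
      t u v (t x y z) = t (t u v x) y z + t x (t v u y) z + t x y (t u v z)) /\
  (forall x y z : F, w x y *: z = t x z y - t y z x) /\
  (forall x y z : F, w x y *: z = t y x z - t x y z) /\
  (forall u v x y : F, w u v * w x y = w (t y x u) v - w (t y x v) u).

Section PolyMaps.
Variables (k : numFieldType) (F : vectType k).
Variables (t : F -> F -> F -> F) (w : F -> F -> k).

(* The space F (+) k, the second component being k viewed as a k-module. *)
Definition V := (F * k^o)%type.

(* w is the derivative of f at p in direction v: f(p + s v) is a polynomial
   in s whose constant term is f(p) and whose linear coefficient is w. *)
Definition is_dir_deriv (f : V -> V) (p v dv : V) : Prop :=
  exists (n : nat) (c : nat -> V), forall s : k,
    f (p + s *: v) = f p + s *: dv + \sum_(i < n) s ^+ i.+2 *: c i.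

Definition Dmap (f : V -> V) (p v : V) : V :=
  epsilon (inhabits (0 : V)) (is_dir_deriv f p v).

Definition bracket (f g : V -> V) : V -> V :=
  fun p => Dmap f p (g p) - Dmap g p (f p).

Definition mkV (z : F) (x : k) : V := (z, x : k^o).

Definition Kmap (a b : F) : V -> V := fun _ => mkV 0 (2 * w a b).
Definition Umap (a : F) : V -> V := fun p => mkV a (w a p.1).
Definition Smap (a b : F) : V -> V :=
  fun p => mkV (t a b p.1) (- (p.2 : k) * w a b).
Definition Utmap (a : F) : V -> V := fun p =>
  let z := p.1 in let ze : k := p.2 in
  mkV (- (1/2) *: t z a z - (1/2 * ze) *: a)
      (1/6 * w (t z z z) a - 1/2 * ze * w a z).
Definition Ktmap (a b : F) : V -> V := fun p =>
  let z := p.1 in let ze : k := p.2 in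
  mkV ((1/6 * w a b) *: t z z z + (1/2 * ze * w a b) *: z)
      (- (1/12) * w a b * w (t z z z) z + 1/2 * ze ^+ 2 * w a b).

Definition generator (f : V -> V) : Prop :=
  (exists a b, f = Kmap a b) \/ (exists a, f = Umap a) \/
  (exists a b, f = Smap a b) \/ (exists a, f = Utmap a) \/
  (exists a b, f = Ktmap a b).

Inductive inspan : (V -> V) -> Prop :=
  | span0 : inspan (fun _ => 0)
  | spanG f : generator f -> inspan f
  | spanLC (a : k) f g : inspan f -> inspan g -> inspan (fun p => a *: f p + g p).

End PolyMaps.

From HB Require Import structures.
From mathcomp Require Import all_boot all_order all_algebra.
From mathcomp Require Import ring.
From Stdlib Require Import ClassicalEpsilon FunctionalExtensionality.
Set Implicit Arguments. Unset Strict Implicit. Unset Printing Implicit Defensive.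
Import Order.TTheory GRing.Theory Num.Theory.
Local Open Scope ring_scope.

(* Every generator is a polynomial map on F (+) k.  Along a line p + s v it is a
   polynomial curve in s, so its derivative Df(p)(v) is the coefficient of s, which
   is unique because a polynomial vanishing on the nonzero elements of the infinite
   field k vanishes at 0.  The generators, and hence their span, have a derivative
   Df(p) linear in the direction and a symmetric second derivative; for such maps
   the Jacobi identity holds because the second-derivative terms cancel in pairs.
   Each commutation relation is obtained by expanding both sides multilinearly and
   reducing them with the axioms and a few derived identities, the deepest being
   <(zzz), (abz)> = -1/2 <a,b> <(zzz), z>; the relations show that the span is
   closed under the bracket. *)

Lemma scale_regular (k : numFieldType) (a b : k) : a *: (b : k^o) = a * b.
Proof. by []. Qed.

Section LinearProp.
Variables (k : numFieldType) (X Y : lmodType k) (L : X -> Y).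
Hypothesis L_lin : linear L.

Lemma lin0 : L 0 = 0.
Proof.
have := L_lin 1 0 0; rewrite !scale1r !addr0 => E.
by apply: (addrI (L 0)); rewrite addr0 -E.
Qed.

Lemma linD x y : L (x + y) = L x + L y.
Proof. by have := L_lin 1 x y; rewrite !scale1r. Qed.

Lemma linZ a x : L (a *: x) = a *: L x.
Proof. by rewrite -[a *: x]addr0 L_lin lin0 addr0. Qed.

Lemma linN x : L (- x) = - L x.
Proof. by rewrite -scaleN1r linZ scaleN1r. Qed.

Lemma linB x y : L (x - y) = L x - L y.
Proof. by rewrite linD linN. Qed.

End LinearProp.

Lemma linear_scale (k : numFieldType) (X : lmodType k) (a : k) :
  linear (fun x : X => a *: x).
Proof. by move=> b x y; rewrite scalerDr !scalerA mulrC. Qed.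

Lemma linear_opp (k : numFieldType) (X : lmodType k) : linear (fun x : X => - x).
Proof. by move=> a x y; rewrite opprD scalerN. Qed.

(* Chaining these proves [L = R] as [L - R = c1 (x1 - y1) + c2 (x2 - y2) + ...]
   from hypotheses [xi = yi]. *)
Lemma eq_modulo (k : numFieldType) (X : lmodType k) (c : k) (x y L R : X) :
  x = y -> L - c *: x = R - c *: y -> L = R.
Proof. by move=> -> /addIr. Qed.

Lemma eqr_modulo (k : numFieldType) (c x y L R : k) :
  x = y -> L - c * x = R - c * y -> L = R.
Proof. by move=> -> /addIr. Qed.

Arguments eq_modulo {k X} c {x y L R}.
Arguments eqr_modulo {k} c {x y L R}.

Lemma vect_eq_functionals (k : numFieldType) (X : vectType k) (x y : X) :
  (forall phi : X -> k^o, linear phi -> phi x = phi y) -> x = y.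
Proof.
move=> Hxy; apply/eqP; rewrite -subr_eq0; apply/eqP.
rewrite (coord_vbasis (memvf (x - y))); apply: big1 => i _.
suff -> : coord (vbasis fullv) i (x - y) = 0 by rewrite scale0r.
rewrite linearB /=; apply/eqP; rewrite subr_eq0; apply/eqP.
by apply: Hxy => a u v; rewrite linearP.
Qed.

Ltac push_linear Hphi :=
  repeat progress rewrite ?(linD Hphi) ?(linB Hphi) ?(linZ Hphi) ?(linN Hphi)
    ?(lin0 Hphi) ?scale_regular.

(* Identities in a finite-dimensional space, checked under every linear functional,
   where they become identities in [k]. *)
Ltac lmod_ring :=
  let phi := fresh "phi" in let Hphi := fresh "Hphi" in
  apply: vect_eq_functionals; intros phi Hphi; push_linear Hphi; by ring.

Ltac lmod_field :=
  let phi := fresh "phi" in let Hphi := fresh "Hphi" in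
  apply: vect_eq_functionals; intros phi Hphi; push_linear Hphi; by field.

Definition is_bilinear (k : numFieldType) (X Y Z : lmodType k)
    (B : X -> Y -> Z) : Prop :=
  (forall y, linear (B^~ y)) /\ (forall x, linear (B x)).

Definition is_trilinear (k : numFieldType) (X Y Z W : lmodType k)
    (T : X -> Y -> Z -> W) : Prop :=
  (forall y z, linear (fun x => T x y z)) /\ (forall x, is_bilinear (T x)).

(** * Polynomial curves and jets *)

Section PolynomialCurves.
Variable k : numFieldType.

Inductive pcurve (X : lmodType k) : (k -> X) -> Prop :=
| pcurve_cst (x : X) : pcurve (fun _ => x)
| pcurve_horner (x : X) (r : k -> X) : pcurve r -> pcurve (fun s => x + s *: r s).

Lemma pcurve_ext (X : lmodType k) (f g : k -> X) : pcurve f -> f =1 g -> pcurve g.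
Proof. by move=> Hf /functional_extensionality <-. Qed.

Lemma pcurve_mulX (X : lmodType k) (f : k -> X) : pcurve f -> pcurve (fun s => s *: f s).
Proof. by move=> Hf; apply: (pcurve_ext (pcurve_horner 0 Hf)) => s; rewrite add0r. Qed.

Lemma pcurve_add (X : lmodType k) (f g : k -> X) : pcurve f -> pcurve g -> pcurve (fun s => f s + g s).
Proof.
move=> Hf; elim: Hf g => [x|x r Hr IH] g; case=> [y|y r' Hr'].
- exact: pcurve_cst.
- by apply: (pcurve_ext (pcurve_horner (x + y) Hr')) => s; rewrite addrA.
- by apply: (pcurve_ext (pcurve_horner (x + y) Hr)) => s; rewrite addrAC.
- apply: (pcurve_ext (pcurve_horner (x + y) (IH _ Hr'))) => s.
  by rewrite scalerDr addrACA.
Qed.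

Lemma pcurve_linear (X Y : lmodType k) (L : X -> Y) (f : k -> X) :
  linear L -> pcurve f -> pcurve (fun s => L (f s)).
Proof.
move=> HL; elim=> [x|x r _ IH]; first exact: pcurve_cst.
by apply: (pcurve_ext (pcurve_horner (L x) IH)) => s; rewrite (linD HL) (linZ HL).
Qed.

Lemma pcurve_bilinear (X Y Z : lmodType k) (B : X -> Y -> Z) f g :
  is_bilinear B -> pcurve f -> pcurve g -> pcurve (fun s => B (f s) (g s)).
Proof.
move=> [B1 B2] Hf; elim: Hf g => [x|x r _ IH] g Hg; first exact: pcurve_linear.
apply: (pcurve_ext (pcurve_add (pcurve_linear (B2 x) Hg) (pcurve_mulX (IH _ Hg)))).
by move=> s; rewrite (linD (B1 _)) (linZ (B1 _)).
Qed.

Lemma pcurve_trilinear (X Y Z W : lmodType k) (T : X -> Y -> Z -> W) f g h :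
  is_trilinear T -> pcurve f -> pcurve g -> pcurve h ->
  pcurve (fun s => T (f s) (g s) (h s)).
Proof.
move=> [T1 T23] Hf; elim: Hf g h => [x|x r _ IH] g h Hg Hh.
  exact: pcurve_bilinear.
apply: (pcurve_ext (pcurve_add (pcurve_bilinear (T23 x) Hg Hh) (pcurve_mulX (IH _ _ Hg Hh)))).
by move=> s; rewrite (linD (T1 _ _)) (linZ (T1 _ _)).
Qed.

Lemma pcurve_monomial (X : lmodType k) (x : X) m : pcurve (fun s => s ^+ m *: x).
Proof.
elim: m => [|m IH]; first by apply: (pcurve_ext (pcurve_cst x)) => s; rewrite scale1r.
by apply: (pcurve_ext (pcurve_mulX IH)) => s; rewrite scalerA exprS.
Qed.

Lemma pcurve_sum (X : lmodType k) n (G : 'I_n -> k -> X) :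
  (forall i, pcurve (G i)) -> pcurve (fun s => \sum_(i < n) G i s).
Proof.
elim: n G => [|n IH] G HG.
  by apply: (pcurve_ext (pcurve_cst 0)) => s; rewrite big_ord0.
apply: (pcurve_ext (pcurve_add (IH _ (fun i => HG _)) (HG ord_max))) => s.
by rewrite big_ord_recr.
Qed.

Lemma pcurve_coefs (X : lmodType k) (r : k -> X) : pcurve r ->
  exists n (c : nat -> X), forall s, r s = \sum_(i < n) s ^+ i *: c i.
Proof.
elim=> [x|x r' _ [n [c Hc]]].
  by exists 1%N, (fun _ => x) => s; rewrite big_ord1 scale1r.
exists n.+1, (fun i => if i is j.+1 then c j else x) => s.
rewrite big_ord_recl scale1r Hc scaler_sumr; congr (_ + _).
by apply: eq_bigr => i _; rewrite exprS scalerA.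
Qed.

Lemma pcurve_poly (r : k -> k^o) : pcurve r -> exists P : {poly k}, r =1 horner P.
Proof.
elim=> [x|x r' _ [P HP]]; first by exists x%:P => s; rewrite hornerC.
by exists (x%:P + 'X * P) => s; rewrite hornerD hornerC hornerM hornerX -HP.
Qed.

(* The one place where [k] being infinite matters: 1, 2, ..., size P are distinct
   nonzero roots. *)
Lemma poly_vanish0 (P : {poly k}) : (forall s, s != 0 -> P.[s] = 0) -> P.[0] = 0.
Proof.
move=> HP; suff -> : P = 0 by rewrite horner0.
apply: contraTeq isT => nzP.
pose rs := [seq (i.+1)%:R | i <- iota 0 (size P)] : seq k.
have rs_roots : all (root P) rs.
  by apply/allP => _ /mapP [i _ ->]; apply/rootP/HP; rewrite pnatr_eq0.
have rs_uniq : uniq rs.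
  by rewrite map_inj_uniq ?iota_uniq // => i j /eqP; rewrite eqr_nat => /eqP [].
by have := max_poly_roots nzP rs_roots rs_uniq; rewrite size_map size_iota ltnn.
Qed.

Lemma pcurve_vanish0 (X : vectType k) (r : k -> X) :
  pcurve r -> (forall s, s != 0 -> r s = 0) -> r 0 = 0.
Proof.
move=> Hr Hz; apply: vect_eq_functionals => phi Hphi; rewrite (lin0 Hphi).
have [P HP] := pcurve_poly (pcurve_linear Hphi Hr).
by rewrite HP; apply: poly_vanish0 => s /Hz; rewrite -HP => ->; rewrite (lin0 Hphi).
Qed.

End PolynomialCurves.

Section Jets.
Variable k : numFieldType.

Definition jet (X : lmodType k) (f : k -> X) (x0 x1 : X) : Prop :=
  exists r, [/\ pcurve r, r 0 = x1 & forall s, f s = x0 + s *: r s].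

Lemma jet_pcurve (X : lmodType k) (f : k -> X) x0 x1 : jet f x0 x1 -> pcurve f.
Proof.
by case=> r [Hr _ Ef]; apply: (pcurve_ext (pcurve_horner x0 Hr)) => s; rewrite Ef.
Qed.

Lemma jet_eq (X : lmodType k) (f : k -> X) y0 y1 x0 x1 :
  jet f y0 y1 -> y0 = x0 -> y1 = x1 -> jet f x0 x1.
Proof. by move=> H <- <-. Qed.

Lemma jet_ext (X : lmodType k) (f g : k -> X) x0 x1 :
  jet f x0 x1 -> f =1 g -> jet g x0 x1.
Proof. by move=> Hf /functional_extensionality <-. Qed.

Lemma jet_cst (X : lmodType k) (x : X) : jet (fun _ => x) x 0.
Proof. by exists (fun _ => 0); split=> [|//|s]; [exact: pcurve_cst|rewrite scaler0 addr0]. Qed.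

Lemma jet_line (X : lmodType k) (x v : X) : jet (fun s => x + s *: v) x v.
Proof. by exists (fun _ => v); split=> //; exact: pcurve_cst. Qed.

Lemma jet_add (X : lmodType k) (f g : k -> X) x0 x1 y0 y1 :
  jet f x0 x1 -> jet g y0 y1 -> jet (fun s => f s + g s) (x0 + y0) (x1 + y1).
Proof.
case=> r [Hr r0 Ef] [r' [Hr' r'0 Eg]].
exists (fun s => r s + r' s); split; first exact: pcurve_add.
  by rewrite r0 r'0.
by move=> s; rewrite Ef Eg scalerDr addrACA.
Qed.

Lemma jet_linear (X Y : lmodType k) (L : X -> Y) (f : k -> X) x0 x1 :
  linear L -> jet f x0 x1 -> jet (fun s => L (f s)) (L x0) (L x1).
Proof.
move=> HL [r [Hr r0 Ef]]; exists (fun s => L (r s)); split; first exact: pcurve_linear.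
  by rewrite r0.
by move=> s; rewrite Ef (linD HL) (linZ HL).
Qed.

Lemma jet_scale (X : lmodType k) (a : k) (f : k -> X) x0 x1 :
  jet f x0 x1 -> jet (fun s => a *: f s) (a *: x0) (a *: x1).
Proof. exact/jet_linear/linear_scale. Qed.

Lemma jet_opp (X : lmodType k) (f : k -> X) x0 x1 :
  jet f x0 x1 -> jet (fun s => - f s) (- x0) (- x1).
Proof. exact/jet_linear/linear_opp. Qed.

Lemma jet_sub (X : lmodType k) (f g : k -> X) x0 x1 y0 y1 :
  jet f x0 x1 -> jet g y0 y1 -> jet (fun s => f s - g s) (x0 - y0) (x1 - y1).
Proof. by move=> Hf /jet_opp; apply: jet_add. Qed.

Lemma jet_bilinear (X Y Z : lmodType k) (B : X -> Y -> Z) f g x0 x1 y0 y1 :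
  is_bilinear B -> jet f x0 x1 -> jet g y0 y1 ->
  jet (fun s => B (f s) (g s)) (B x0 y0) (B x1 y0 + B x0 y1).
Proof.
move=> [B1 B2] [r [Hr r0 Ef]] [r' [Hr' r'0 Eg]].
exists (fun s => B (r s) y0 + B x0 (r' s) + s *: B (r s) (r' s)); split.
- exact: (pcurve_add (pcurve_add (pcurve_linear (B1 y0) Hr) (pcurve_linear (B2 x0) Hr'))
           (pcurve_mulX (pcurve_bilinear (conj B1 B2) Hr Hr'))).
- by rewrite scale0r addr0 r0 r'0.
move=> s; rewrite Ef Eg (linD (B2 _)) (linZ (B2 _)) !(linD (B1 _)) !(linZ (B1 _)).
by rewrite !scalerDr !scalerA -!addrA.
Qed.

Lemma jet_trilinear (X Y Z W : lmodType k) (T : X -> Y -> Z -> W) f g h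
    x0 x1 y0 y1 z0 z1 :
  is_trilinear T -> jet f x0 x1 -> jet g y0 y1 -> jet h z0 z1 ->
  jet (fun s => T (f s) (g s) (h s)) (T x0 y0 z0)
      (T x1 y0 z0 + T x0 y1 z0 + T x0 y0 z1).
Proof.
move=> [T1 T23] [r [Hr r0 Ef]] Hg Hh.
have [q [Hq q0 Eq]] := jet_bilinear (T23 x0) Hg Hh.
exists (fun s => q s + T (r s) (g s) (h s)); split.
- exact: (pcurve_add Hq (pcurve_trilinear (conj T1 T23) Hr (jet_pcurve Hg) (jet_pcurve Hh))).
- case: Hg Hh => rg [_ _ Eg] [rh [_ _ Eh]].
  by rewrite q0 r0 Eg Eh !scale0r !addr0 addrC addrA.
by move=> s; rewrite Ef (linD (T1 _ _)) (linZ (T1 _ _)) Eq scalerDr addrA.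
Qed.

Lemma jet_pair (X Y : lmodType k) (f : k -> X) (g : k -> Y) x0 x1 y0 y1 :
  jet f x0 x1 -> jet g y0 y1 -> jet (fun s => (f s, g s)) (x0, y0) (x1, y1).
Proof.
move=> Hf Hg.
have pairE (x : X) (y : Y) : (x, y) = (x, 0) + (0, y).
  by apply/eqP; rewrite xpair_eqE /= addr0 add0r !eqxx.
rewrite (pairE x0) (pairE x1); apply: (jet_ext _ (fun s => esym (pairE _ _))).
apply: jet_add.
- apply: (jet_linear (L := fun x : X => (x, 0 : Y))) => // a x y.
  by apply/eqP; rewrite xpair_eqE /= scaler0 addr0 !eqxx.
- apply: (jet_linear (L := fun y : Y => (0 : X, y))) => // a x y.
  by apply/eqP; rewrite xpair_eqE /= scaler0 addr0 !eqxx.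
Qed.

Lemma jet_unique (X : vectType k) (f : k -> X) x0 x1 y1 :
  jet f x0 x1 -> jet f x0 y1 -> x1 = y1.
Proof.
move=> [r [Hr <- Er]] [r' [Hr' <- Er']]; apply/eqP; rewrite -subr_eq0; apply/eqP.
apply: (pcurve_vanish0 (r := fun s => r s - r' s)) => [|s nz_s].
  exact: (pcurve_add Hr (pcurve_linear (@linear_opp k X) Hr')).
apply/eqP; rewrite -(inj_eq (scalerI nz_s)) scaler0 scalerBr subr_eq0.
by rewrite -(inj_eq (addrI x0)) -Er -Er'.
Qed.

End Jets.

(** * Directional derivatives and the bracket *)

Section LieBracket.
Variables (k : numFieldType) (F : vectType k).
Local Notation V := (V F).

Definition has_dderiv (f : V -> V) (p v d : V) : Prop :=
  jet (fun s => f (p + s *: v)) (f p) d.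

Lemma is_dir_derivP f p v d : is_dir_deriv f p v d <-> has_dderiv f p v d.
Proof.
split=> [[n [c Ef]]|[r [Hr r0 Ef]]].
  exists (fun s => d + \sum_(i < n) s ^+ i.+1 *: c i); split.
  - exact: (pcurve_add (pcurve_cst d) (pcurve_sum (fun i => pcurve_monomial _ _))).
  - by rewrite big1 ?addr0 // => i _; rewrite expr0n scale0r.
  move=> s; rewrite Ef scalerDr scaler_sumr addrA; congr (_ + _).
  by apply: eq_bigr => i _; rewrite scalerA -exprS.
have [r' [Hr' Er]] : exists r', pcurve r' /\ forall s, r s = d + s *: r' s.
  case: Hr r0 {Ef} => [x|x r' Hr'] <-.
  - by exists (fun _ => 0); split=> [|s]; [exact: pcurve_cst|rewrite scaler0 addr0].
  - by exists r'; split=> // s; rewrite scale0r addr0.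
have [n [c Er']] := pcurve_coefs Hr'.
exists n, c => s; rewrite Ef Er Er' scalerDr addrA !scaler_sumr; congr (_ + _).
by apply: eq_bigr => i _; rewrite !scalerA !exprS mulrA.
Qed.

Lemma DmapE f p v d : has_dderiv f p v d -> Dmap f p v = d.
Proof.
move=> Hd; have ex_d : exists d, is_dir_deriv f p v d by exists d; apply/is_dir_derivP.
exact/(jet_unique _ Hd)/is_dir_derivP/(epsilon_spec (inhabits 0) _ ex_d).
Qed.

Lemma has_dderiv_cst (x p v : V) : has_dderiv (fun _ => x) p v 0.
Proof. exact: jet_cst. Qed.

Lemma has_dderiv_lc (a : k) (f g : V -> V) p v df dg :
  has_dderiv f p v df -> has_dderiv g p v dg ->
  has_dderiv (fun q => a *: f q + g q) p v (a *: df + dg).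
Proof. by move=> /(jet_scale a); apply: jet_add. Qed.

Lemma has_dderiv_sub (f g : V -> V) p v df dg :
  has_dderiv f p v df -> has_dderiv g p v dg ->
  has_dderiv (fun q => f q - g q) p v (df - dg).
Proof. exact: jet_sub. Qed.

Definition derivatives (f : V -> V) (D : V -> V -> V) (D2 : V -> V -> V -> V) :=
  [/\ forall p v, has_dderiv f p v (D p v), forall p, linear (D p),
      forall p v u, has_dderiv (D^~ v) p u (D2 p v u)
    & forall p v u, D2 p v u = D2 p u v].

Definition twice_diff (f : V -> V) := exists D D2, derivatives f D D2.

Lemma bracketE (f g : V -> V) Df Dg :
  (forall p v, has_dderiv f p v (Df p v)) -> (forall p v, has_dderiv g p v (Dg p v)) ->
  forall p, bracket f g p = Df p (g p) - Dg p (f p).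
Proof. by move=> Hf Hg p; rewrite /bracket (DmapE (Hf _ _)) (DmapE (Hg _ _)). Qed.

Lemma has_dderiv_apply (D : V -> V -> V) D2 (h : V -> V) p u dh :
  (forall q, linear (D q)) -> (forall q v w, has_dderiv (D^~ v) q w (D2 q v w)) ->
  has_dderiv h p u dh ->
  has_dderiv (fun q => D q (h q)) p u (D2 p (h p) u + D p dh).
Proof.
move=> D_lin HD [r [Hr r0 Eh]].
have [q [Hq q0 Eq]] := HD p (h p) u.
have Dr : pcurve (fun s => D (p + s *: u) (r s)).
  elim: Hr {Eh r0} => [x|x r' _ IH]; first exact: jet_pcurve (HD p x u).
  apply: (pcurve_ext (pcurve_add (jet_pcurve (HD p x u)) (pcurve_mulX IH))) => s.
  by rewrite (linD (D_lin _)) (linZ (D_lin _)).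
exists (fun s => q s + D (p + s *: u) (r s)); split; first exact: pcurve_add.
  by rewrite q0 r0 scale0r addr0.
by move=> s; rewrite Eh (linD (D_lin _)) (linZ (D_lin _)) Eq scalerDr addrA.
Qed.

Lemma has_dderiv_bracket f g Df D2f Dg D2g :
  derivatives f Df D2f -> derivatives g Dg D2g -> forall p v,
  has_dderiv (bracket f g) p v
    (D2f p (g p) v + Df p (Dg p v) - (D2g p (f p) v + Dg p (Df p v))).
Proof.
move=> [Hf Df_lin HDf _] [Hg Dg_lin HDg _] p v.
have -> : bracket f g = fun q => Df q (g q) - Dg q (f q).
  exact/functional_extensionality/bracketE.
by apply: has_dderiv_sub; apply: has_dderiv_apply.
Qed.

Lemma derivatives_first_order (f : V -> V) (D : V -> V -> V) :
  (forall p v, has_dderiv f p v (D p v)) -> (forall p, linear (D p)) ->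
  (forall p p' v, D p v = D p' v) -> derivatives f D (fun _ _ _ => 0).
Proof.
move=> Hf D_lin D_cst; split=> // p v u.
by apply: (jet_ext (has_dderiv_cst (D p v) p u)) => s; apply: D_cst.
Qed.

Lemma twice_diff0 : twice_diff (fun _ => 0).
Proof.
exists (fun _ _ => 0), (fun _ _ _ => 0).
by split=> // [p v|p a x y|p v u]; rewrite ?scaler0 ?addr0 //; exact: has_dderiv_cst.
Qed.

Lemma twice_diff_lc (a : k) (f g : V -> V) :
  twice_diff f -> twice_diff g -> twice_diff (fun q => a *: f q + g q).
Proof.
move=> [Df [D2f [Hf Df_lin HDf D2f_sym]]] [Dg [D2g [Hg Dg_lin HDg D2g_sym]]].
exists (fun p v => a *: Df p v + Dg p v), (fun p v u => a *: D2f p v u + D2g p v u).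
split=> [p v|p b x y|p v u|p v u]; first exact: has_dderiv_lc.
- by rewrite (linD (Df_lin p)) (linZ (Df_lin p)) (linD (Dg_lin p)) (linZ (Dg_lin p)); lmod_ring.
- exact: has_dderiv_lc (HDf p v u) (HDg p v u).
- by rewrite D2f_sym D2g_sym.
Qed.

Section Bracket.
Variables f g h : V -> V.
Hypotheses (Hf : twice_diff f) (Hg : twice_diff g) (Hh : twice_diff h).

Lemma bracket0l p : bracket (fun _ => 0) f p = 0.
Proof.
have [Df [_ [Ef Df_lin _ _]]] := Hf.
by rewrite (bracketE (fun p v => has_dderiv_cst 0 p v) Ef) (lin0 (Df_lin p)) subrr.
Qed.

Lemma bracket0r p : bracket f (fun _ => 0) p = 0.
Proof.
have [Df [_ [Ef Df_lin _ _]]] := Hf.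
by rewrite (bracketE Ef (fun p v => has_dderiv_cst 0 p v)) (lin0 (Df_lin p)) subrr.
Qed.

Lemma bracket_linl (a : k) p :
  bracket (fun q => a *: f q + g q) h p = a *: bracket f h p + bracket g h p.
Proof.
have [Df [_ [Ef _ _ _]]] := Hf; have [Dg [_ [Eg _ _ _]]] := Hg.
have [Dh [_ [Eh Dh_lin _ _]]] := Hh.
rewrite (bracketE (fun p v => has_dderiv_lc a (Ef p v) (Eg p v)) Eh).
by rewrite (bracketE Ef Eh) (bracketE Eg Eh) (linD (Dh_lin p)) (linZ (Dh_lin p)); lmod_ring.
Qed.

Lemma bracket_linr (a : k) p :
  bracket h (fun q => a *: f q + g q) p = a *: bracket h f p + bracket h g p.
Proof.
have [Df [_ [Ef _ _ _]]] := Hf; have [Dg [_ [Eg _ _ _]]] := Hg.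
have [Dh [_ [Eh Dh_lin _ _]]] := Hh.
rewrite (bracketE Eh (fun p v => has_dderiv_lc a (Ef p v) (Eg p v))).
by rewrite (bracketE Eh Ef) (bracketE Eh Eg) (linD (Dh_lin p)) (linZ (Dh_lin p)); lmod_ring.
Qed.

(* The second-derivative terms cancel in pairs by the symmetry of [D2]. *)
Lemma bracket_jacobi p :
  bracket f (bracket g h) p + bracket g (bracket h f) p + bracket h (bracket f g) p = 0.
Proof.
have [Df [D2f dF]] := Hf; have [Dg [D2g dG]] := Hg; have [Dh [D2h dH]] := Hh.
have [Ef Df_lin _ D2f_sym] := dF; have [Eg Dg_lin _ D2g_sym] := dG.
have [Eh Dh_lin _ D2h_sym] := dH.
rewrite (bracketE Ef (has_dderiv_bracket dG dH)) (bracketE Eg (has_dderiv_bracket dH dF)).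
rewrite (bracketE Eh (has_dderiv_bracket dF dG)) (bracketE Eg Eh) (bracketE Eh Ef).
rewrite (bracketE Ef Eg) !(linB (Df_lin p)) !(linB (Dg_lin p)) !(linB (Dh_lin p)).
rewrite (D2g_sym p (f p) (h p)) (D2h_sym p (f p) (g p)) (D2f_sym p (g p) (h p)).
lmod_ring.
Qed.

End Bracket.

End LieBracket.

(** * Freudenthal triple systems *)

Section FTS.
Variables (k : numFieldType) (F : vectType k).
Variables (t : F -> F -> F -> F) (w : F -> F -> k).
Hypothesis FTS : is_FTS t w.
Local Notation V := (V F).

Lemma linear_t1 u v : linear (fun x => t x u v).
Proof. by have [H _] := FTS; move=> a x y; apply: H. Qed.
Lemma linear_t2 u v : linear (fun x => t u x v).
Proof. by have [_ [H _]] := FTS; move=> a x y; apply: H. Qed.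
Lemma linear_t3 u v : linear (t u v).
Proof. by have [_ [_ [H _]]] := FTS; move=> a x y; apply: H. Qed.
Lemma linear_wl u : linear (fun x => w x u : k^o).
Proof. by have [_ [_ [_ [H _]]]] := FTS; move=> a x y; apply: H. Qed.
Lemma linear_wr u : linear (fun x => w u x : k^o).
Proof. by have [_ [_ [_ [_ [H _]]]]] := FTS; move=> a x y; apply: H. Qed.
Lemma wC x y : w x y = - w y x.
Proof. by have [_ [_ [_ [_ [_ [H _]]]]]] := FTS. Qed.
Lemma t_derivation u v x y z :
  t u v (t x y z) = t (t u v x) y z + t x (t v u y) z + t x y (t u v z).
Proof. by have [_ [_ [_ [_ [_ [_ [H _]]]]]]] := FTS. Qed.
Lemma t_skew13 x y z : w x y *: z = t x z y - t y z x.
Proof. by have [_ [_ [_ [_ [_ [_ [_ [H _]]]]]]]] := FTS. Qed.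
Lemma t_skew12 x y z : w x y *: z = t y x z - t x y z.
Proof. by have [_ [_ [_ [_ [_ [_ [_ [_ [H _]]]]]]]]] := FTS. Qed.
Lemma w_t_compat u v x y : w u v * w x y = w (t y x u) v - w (t y x v) u.
Proof. by have [_ [_ [_ [_ [_ [_ [_ [_ [_ H]]]]]]]]] := FTS. Qed.

Lemma tD1 x y u v : t (x + y) u v = t x u v + t y u v. Proof. exact: (linD (linear_t1 u v)). Qed.
Lemma tD2 x y u v : t u (x + y) v = t u x v + t u y v. Proof. exact: (linD (linear_t2 u v)). Qed.
Lemma tD3 x y u v : t u v (x + y) = t u v x + t u v y. Proof. exact: (linD (linear_t3 u v)). Qed.
Lemma tZ1 a x u v : t (a *: x) u v = a *: t x u v. Proof. exact: (linZ (linear_t1 u v)). Qed.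
Lemma tZ2 a x u v : t u (a *: x) v = a *: t u x v. Proof. exact: (linZ (linear_t2 u v)). Qed.
Lemma tZ3 a x u v : t u v (a *: x) = a *: t u v x. Proof. exact: (linZ (linear_t3 u v)). Qed.
Lemma tN1 x u v : t (- x) u v = - t x u v. Proof. exact: (linN (linear_t1 u v)). Qed.
Lemma tN2 x u v : t u (- x) v = - t u x v. Proof. exact: (linN (linear_t2 u v)). Qed.
Lemma tN3 x u v : t u v (- x) = - t u v x. Proof. exact: (linN (linear_t3 u v)). Qed.
Lemma t0_1 u v : t 0 u v = 0. Proof. exact: (lin0 (linear_t1 u v)). Qed.
Lemma t0_2 u v : t u 0 v = 0. Proof. exact: (lin0 (linear_t2 u v)). Qed.
Lemma t0_3 u v : t u v 0 = 0. Proof. exact: (lin0 (linear_t3 u v)). Qed.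
Lemma wDl x y u : w (x + y) u = w x u + w y u. Proof. exact: (linD (linear_wl u)). Qed.
Lemma wDr x y u : w u (x + y) = w u x + w u y. Proof. exact: (linD (linear_wr u)). Qed.
Lemma wZl a x u : w (a *: x) u = a * w x u. Proof. exact: (linZ (linear_wl u)). Qed.
Lemma wZr a x u : w u (a *: x) = a * w u x. Proof. exact: (linZ (linear_wr u)). Qed.
Lemma wNl x u : w (- x) u = - w x u. Proof. exact: (linN (linear_wl u)). Qed.
Lemma wNr x u : w u (- x) = - w u x. Proof. exact: (linN (linear_wr u)). Qed.
Lemma wBl x y u : w (x - y) u = w x u - w y u. Proof. exact: (linB (linear_wl u)). Qed.
Lemma wBr x y u : w u (x - y) = w u x - w u y. Proof. exact: (linB (linear_wr u)). Qed.
Lemma w0l u : w 0 u = 0. Proof. exact: (lin0 (linear_wl u)). Qed.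
Lemma w0r u : w u 0 = 0. Proof. exact: (lin0 (linear_wr u)). Qed.

Ltac expand_tw := repeat progress rewrite ?tD1 ?tD2 ?tD3 ?tZ1 ?tZ2 ?tZ3 ?tN1 ?tN2 ?tN3
  ?t0_1 ?t0_2 ?t0_3 ?wDl ?wDr ?wZl ?wZr ?wNl ?wNr ?w0l ?w0r ?scale_regular.
Ltac expand_tw_in H := repeat progress rewrite ?tD1 ?tD2 ?tD3 ?tZ1 ?tZ2 ?tZ3 ?tN1 ?tN2
  ?tN3 ?t0_1 ?t0_2 ?t0_3 ?wDl ?wDr ?wZl ?wZr ?wNl ?wNr ?w0l ?w0r ?scale_regular in H.

Lemma trilinear_t : is_trilinear t.
Proof. by split=> [|x]; [exact: linear_t1|split; [exact: linear_t2|exact: linear_t3]]. Qed.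

Lemma bilinear_w : is_bilinear (fun x y => w x y : k^o).
Proof. by split; [exact: linear_wl|exact: linear_wr]. Qed.

Lemma bilinear_scale : is_bilinear (fun (a : k^o) (x : F) => a *: x).
Proof.
split=> [y|a] b x z; first by rewrite scalerDl scalerA.
by rewrite scalerDr !scalerA mulrC.
Qed.

Lemma bilinear_mul : is_bilinear (fun a b : k^o => a * b : k^o).
Proof. by split=> [y|a] b x z; rewrite !scale_regular; ring. Qed.

Lemma jet_t f g h x0 x1 y0 y1 z0 z1 :
  jet f x0 x1 -> jet g y0 y1 -> jet h z0 z1 ->
  jet (fun s => t (f s) (g s) (h s)) (t x0 y0 z0) (t x1 y0 z0 + t x0 y1 z0 + t x0 y0 z1).
Proof. exact: jet_trilinear trilinear_t. Qed.

Lemma jet_w (f g : k -> F) x0 x1 y0 y1 :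
  jet f x0 x1 -> jet g y0 y1 ->
  jet (fun s => w (f s) (g s) : k^o) (w x0 y0) (w x1 y0 + w x0 y1).
Proof. exact: jet_bilinear bilinear_w. Qed.

Lemma jet_scale_fun (f : k -> k^o) (g : k -> F) x0 x1 y0 y1 :
  jet f x0 x1 -> jet g y0 y1 -> jet (fun s => f s *: g s) (x0 *: y0) (x1 *: y0 + x0 *: y1).
Proof. exact: jet_bilinear bilinear_scale. Qed.

Lemma jet_mul (f g : k -> k^o) x0 x1 y0 y1 :
  jet f x0 x1 -> jet g y0 y1 -> jet (fun s => f s * g s : k^o) (x0 * y0) (x1 * y0 + x0 * y1).
Proof. exact: jet_bilinear bilinear_mul. Qed.

Lemma jet_fst (p v : V) : jet (fun s => (p + s *: v).1) p.1 v.1.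
Proof. exact: jet_line. Qed.

Lemma jet_snd (p v : V) : jet (fun s => (p + s *: v).2 : k^o) p.2 v.2.
Proof. exact: jet_line. Qed.

Ltac jet_step := first [ apply: jet_cst | apply: jet_fst | apply: jet_snd | apply: jet_pair
  | apply: jet_sub | apply: jet_add | apply: jet_opp | apply: jet_t | apply: jet_w
  | apply: jet_scale_fun | apply: jet_mul ].

(* Leaves the computed jet value to be matched with the claimed derivative. *)
Ltac compute_dderiv := rewrite /has_dderiv /=; eapply jet_eq; [repeat jet_step | by [] | ].

Lemma pairD (x1 x2 : F) (y1 y2 : k) : (x1, y1 : k^o) + (x2, y2 : k^o) = (x1 + x2, y1 + y2 : k^o).
Proof. by []. Qed.
Lemma pairZ (c : k) (x : F) (y : k) : c *: (x, y : k^o) = (c *: x, c * y : k^o).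
Proof. by []. Qed.
Lemma pairN (x : F) (y : k) : - (x, y : k^o) = (- x, - y : k^o).
Proof. by []. Qed.
Lemma pair0 : 0 = (0 : F, 0 : k^o).
Proof. by []. Qed.

Ltac eq_pairs := rewrite ?pair0; repeat progress rewrite ?pairZ ?pairN ?pairD;
  apply: (f_equal2 pair).
Ltac eqV_field := eq_pairs; [expand_tw; lmod_field | expand_tw; by field].

(* Hand-computed derivatives of the generators; [dcube] and [d2cube] are the first
   and second derivatives of [z |-> (zzz)]. *)
Definition dcube (z v : F) := t v z z + t z v z + t z z v.
Definition d2cube (z v u : F) :=
  t v u z + t v z u + t u v z + t z v u + t u z v + t z u v.

Definition dK (p v : V) : V := 0.
Definition dU a (p v : V) : V := mkV 0 (w a v.1).
Definition dS a b (p v : V) : V := mkV (t a b v.1) (- v.2 * w a b).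
Definition dUt a (p v : V) : V :=
  mkV (- (1/2) *: (t v.1 a p.1 + t p.1 a v.1) - (1/2 * v.2) *: a)
      (1/6 * w (dcube p.1 v.1) a - 1/2 * v.2 * w a p.1 - 1/2 * p.2 * w a v.1).
Definition d2Ut a (p v u : V) : V :=
  mkV (- (1/2) *: (t v.1 a u.1 + t u.1 a v.1))
      (1/6 * w (d2cube p.1 v.1 u.1) a - 1/2 * v.2 * w a u.1 - 1/2 * u.2 * w a v.1).
Definition dKt a b (p v : V) : V :=
  mkV ((1/6 * w a b) *: dcube p.1 v.1 + (1/2 * w a b) *: (v.2 *: p.1 + p.2 *: v.1))
      (- (1/12) * w a b * (w (dcube p.1 v.1) p.1 + w (t p.1 p.1 p.1) v.1)
       + p.2 * v.2 * w a b).
Definition d2Kt a b (p v u : V) : V :=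
  mkV ((1/6 * w a b) *: d2cube p.1 v.1 u.1 + (1/2 * w a b) *: (v.2 *: u.1 + u.2 *: v.1))
      (- (1/12) * w a b * (w (d2cube p.1 v.1 u.1) p.1 + w (dcube p.1 v.1) u.1
                           + w (dcube p.1 u.1) v.1)
       + u.2 * v.2 * w a b).

Lemma dderiv_K a b p v : has_dderiv (Kmap w a b) p v (dK p v).
Proof. by compute_dderiv. Qed.
Lemma dderiv_U a p v : has_dderiv (Umap w a) p v (dU a p v).
Proof. by compute_dderiv; rewrite /dU /mkV; eqV_field. Qed.
Lemma dderiv_S a b p v : has_dderiv (Smap t w a b) p v (dS a b p v).
Proof. by compute_dderiv; rewrite /dS /mkV; eqV_field. Qed.
Lemma dderiv_Ut a p v : has_dderiv (Utmap t w a) p v (dUt a p v).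
Proof. by compute_dderiv; rewrite /dUt /dcube /mkV; eqV_field. Qed.
Lemma dderiv_Kt a b p v : has_dderiv (Ktmap t w a b) p v (dKt a b p v).
Proof. by compute_dderiv; rewrite /dKt /dcube /mkV; eqV_field. Qed.
Lemma dderiv_dUt a p v u : has_dderiv (dUt a ^~ v) p u (d2Ut a p v u).
Proof. by rewrite /dUt /dcube; compute_dderiv; rewrite /d2Ut /d2cube /mkV; eqV_field. Qed.
Lemma dderiv_dKt a b p v u : has_dderiv (dKt a b ^~ v) p u (d2Kt a b p v u).
Proof.
by rewrite /dKt /dcube; compute_dderiv; rewrite /d2Kt /d2cube /dcube /mkV; eqV_field.
Qed.

Lemma twice_diff_generator f : generator t w f -> twice_diff f.
Proof.
case=> [[a [b ->]]|[[a ->]|[[a [b ->]]|[[a ->]|[a [b ->]]]]]].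
- exists dK; exists (fun _ _ _ => 0); apply: derivatives_first_order.
  + exact: dderiv_K.
  + by move=> p c x y; rewrite /dK scaler0 addr0.
  + by [].
- exists (dU a); exists (fun _ _ _ => 0); apply: derivatives_first_order.
  + exact: dderiv_U.
  + by move=> p c x y; rewrite /dU /mkV /=; eqV_field.
  + by [].
- exists (dS a b); exists (fun _ _ _ => 0); apply: derivatives_first_order.
  + exact: dderiv_S.
  + by move=> p c x y; rewrite /dS /mkV /=; eqV_field.
  + by [].
- exists (dUt a), (d2Ut a); split; [exact: dderiv_Ut| |exact: dderiv_dUt|].
  + by move=> p c x y; rewrite /dUt /dcube /mkV /=; eqV_field.
  + by move=> p v u; rewrite /d2Ut /d2cube /mkV /=; eqV_field.
- exists (dKt a b), (d2Kt a b); split; [exact: dderiv_Kt| |exact: dderiv_dKt|].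
  + by move=> p c x y; rewrite /dKt /dcube /mkV /=; eqV_field.
  + by move=> p v u; rewrite /d2Kt /d2cube /dcube /mkV /=; eqV_field.
Qed.

Lemma twice_diff_span f : inspan t w f -> twice_diff f.
Proof.
elim=> [|g /twice_diff_generator //|a g h _ Hg _ Hh]; first exact: twice_diff0.
exact: twice_diff_lc.
Qed.

Lemma t_swap12 x y z : t y x z = t x y z + w x y *: z.
Proof. by rewrite t_skew12 addrC subrK. Qed.
Lemma t_swap12' x y z : t x y z = t y x z - w x y *: z.
Proof. by rewrite (t_swap12 x y z) addrK. Qed.
Lemma t_swap13 x y z : t z y x = t x y z - w x z *: y.
Proof. by rewrite t_skew13 opprB addrC subrK. Qed.
Lemma t_swap13' x y z : t x y z = t z y x + w x z *: y.
Proof. by rewrite (t_swap13 x y z) subrK. Qed.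

Lemma w_self z : w z z = 0.
Proof. by have /eqP := wC z z; rewrite -addr_eq0 -mulr2n mulrn_eq0 => /eqP. Qed.

Lemma w_t_swap b a c y : w (t b a c) y = w (t a b y) c.
Proof.
have e := w_t_compat y c b a; rewrite (wC y c) (wC b a) in e.
rewrite t_swap12 wDl wZl; apply: (eqr_modulo 1 e); by ring.
Qed.

Lemma w_t_adjoint a b u v : w (t a b u) v = - w u (t a b v) - w a b * w u v.
Proof.
have e := w_t_compat u v b a; rewrite (wC b a) (wC (t a b v) u) in e.
apply: (eqr_modulo (-1) e); by ring.
Qed.

Lemma w_t_sandwich x z a : w (t z x z) a = w (t z a z) x.
Proof. by rewrite w_t_swap (w_t_swap z a) (t_swap13' x z a) wDl wZl w_self mulr0 addr0. Qed.

Lemma w_cube z a : w (t z z z) a = w (t z a z) z.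
Proof.
rewrite w_t_swap (t_swap13 a z z) (t_swap12' a z z) wBl wZl w_self mulr0 subr0.
by rewrite wBl wZl w_self mulr0 subr0.
Qed.

Lemma w_t_czz c z : w (t c z z) z = w (t z z z) c.
Proof. by rewrite w_cube (t_swap12' c z z) wBl wZl w_self mulr0 subr0. Qed.

Lemma w_t_zzc c z : w (t z z c) z = w (t z z z) c.
Proof. by rewrite (t_swap13 c z z) wBl wZl w_self mulr0 subr0 w_t_czz. Qed.

Lemma w_t_xzz x z a : w (t x z z) a = w (t z a z) x - w x z * w z a.
Proof. by rewrite (t_swap12' x z z) wBl wZl w_t_sandwich. Qed.

Lemma w_t_zzx x z a : w (t z z x) a = w (t z a z) x - 2 * w x z * w z a.
Proof. by rewrite (t_swap13 x z z) wBl wZl w_t_xzz; ring. Qed.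

(* Pair the derivation identity for [(ab(zzz))] with [z]. *)
Lemma w_cube_tabz z a b : w (t z z z) (t a b z) = -(1/2) * w a b * w (t z z z) z.
Proof.
have e := congr1 (w^~ z) (t_derivation a b z z z); rewrite /= in e.
rewrite w_t_adjoint !wDl w_t_czz w_t_zzc -w_cube w_cube (t_swap12 a b z) wDr wZr in e.
rewrite w_cube in e; rewrite w_cube; apply: (eqr_modulo (-1/4) e); by field.
Qed.

Lemma w_cube_tzcz z c : w (t z z z) (t z c z) = 1/2 * w c z * w (t z z z) z.
Proof. by rewrite (t_swap12 c z z) wDr wZr w_cube_tabz; field. Qed.

Lemma w_t_zaz_zbz z a b :
  6 * w (t z a z) (t z b z) + 4 * w a z * w (t z z z) b - 4 * w b z * w (t z z z) a
  = w a b * w (t z z z) z.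
Proof.
have e := w_cube_tabz z a b.
rewrite (wC (t z z z) (t a b z)) (t_swap13' a b z) wDl wZl (w_t_swap z b a) in e.
rewrite (t_derivation b z z z z) !wDl (w_t_xzz (t b z z) z a) in e.
rewrite (w_t_sandwich (t z b z) z a) (w_t_zzx (t b z z) z a) (t_swap12' b z z) in e.
rewrite !wBr !wBl !wZr !wZl w_self -(w_cube z a) (wC b (t z z z)) (wC z a) in e.
rewrite -(w_cube z b) in e; apply: (eqr_modulo (-2) e); by field.
Qed.

Lemma t_zc_cube z c : t z c (t z z z) =
  - w (t z z z) c *: z - (1/2 * w (t z z z) z) *: c + w c z *: t z z z.
Proof.
have e := t_derivation z z z c z.
rewrite (t_swap13 (t z c z) z z) (t_swap12' (t z c z) z z) (t_swap13' (t z z z) c z) in e.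
rewrite (t_swap13 c z z) (t_swap12' c z z) in e.
expand_tw_in e; rewrite -(w_cube z c) in e.
apply: (eq_modulo (-1/2) e); expand_tw; lmod_field.
Qed.

Lemma t_z_zcz_z z c : t z (t z c z) z =
  (2/3 * w (t z z z) c) *: z + (2/3 * w c z) *: t z z z - (1/6 * w (t z z z) z) *: c.
Proof.
have e1 := t_derivation z c z z z.
rewrite (t_swap13 (t z c z) z z) (t_swap12' (t z c z) z z) (t_swap12' c z z) in e1.
expand_tw_in e1; rewrite -(w_cube z c) in e1.
apply: (eq_modulo (-1/3) e1); apply: (eq_modulo (1/3) (t_zc_cube z c)).
expand_tw; lmod_field.
Qed.

(** * The commutation relations *)

Ltac unfold_maps := rewrite /dK /dU /dS /dUt /dKt /dcube /Kmap /Umap /Smap /Utmap /Ktmap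
  /mkV /=; eq_pairs.

Lemma bracket_S_S a b c d p :
  bracket (Smap t w a b) (Smap t w c d) p = Smap t w (t a b c) d p + Smap t w c (t b a d) p.
Proof.
rewrite (bracketE (dderiv_S a b) (dderiv_S c d)); unfold_maps.
- by rewrite (t_derivation a b c d p.1); expand_tw; lmod_field.
- have e := congr1 (w c) (t_skew12 a b d); expand_tw_in e.
  apply: (eqr_modulo (- p.2) (w_t_compat c d b a)); apply: (eqr_modulo (- p.2) e).
  apply: (eqr_modulo (p.2 * w c d) (wC b a)); apply: (eqr_modulo p.2 (wC (t a b d) c)).
  by field.
Qed.

Lemma bracket_S_U a b c p : bracket (Smap t w a b) (Umap w c) p = Umap w (t a b c) p.
Proof.
rewrite (bracketE (dderiv_S a b) (dderiv_U c)); unfold_maps.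
- by expand_tw; lmod_field.
- apply: (eqr_modulo 1 (w_t_compat c p.1 b a)); apply: (eqr_modulo (- w c p.1) (wC b a)).
  by apply: (eqr_modulo (-1) (wC (t a b p.1) c)); field.
Qed.

Lemma bracket_S_K a b c d p : bracket (Smap t w a b) (Kmap w c d) p = w c d *: Kmap w b a p.
Proof.
rewrite (bracketE (dderiv_S a b) (dderiv_K c d)); unfold_maps.
- by expand_tw; lmod_field.
- by apply: (eqr_modulo (-2 * w c d) (wC b a)); field.
Qed.

Lemma bracket_U_U a b p : bracket (Umap w a) (Umap w b) p = Kmap w a b p.
Proof.
rewrite (bracketE (dderiv_U a) (dderiv_U b)); unfold_maps.
- by expand_tw; lmod_field.
- by apply: (eqr_modulo (-1) (wC b a)); field.
Qed.

Lemma bracket_S_Ut a b c p :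
  bracket (Smap t w a b) (Utmap t w c) p = Utmap t w (t b a c) p.
Proof.
rewrite (bracketE (dderiv_S a b) (dderiv_Ut c)); unfold_maps.
- apply: (eq_modulo (-1/2) (t_derivation a b p.1 c p.1)).
  by apply: (eq_modulo (- p.2 / 2) (t_skew12 a b c)); expand_tw; lmod_field.
- expand_tw; rewrite (wC (t p.1 p.1 p.1) (t b a c)) (w_t_swap b a c (t p.1 p.1 p.1)).
  rewrite (t_derivation a b p.1 p.1 p.1) (t_swap12 a b p.1) (w_t_swap b a c p.1).
  by rewrite (wC (t a b p.1) c); expand_tw; field.
Qed.

Lemma bracket_S_Kt a b c d p :
  bracket (Smap t w a b) (Ktmap t w c d) p = w c d *: Ktmap t w a b p.
Proof.
rewrite (bracketE (dderiv_S a b) (dderiv_Kt c d)); unfold_maps.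
- expand_tw; rewrite (t_derivation a b p.1 p.1 p.1) (t_swap12 a b p.1).
  by expand_tw; lmod_field.
- expand_tw; rewrite (w_t_czz (t a b p.1) p.1) -(w_cube p.1 (t a b p.1)).
  by rewrite (w_t_zzc (t a b p.1) p.1) (w_cube_tabz p.1 a b); field.
Qed.

Lemma bracket_U_Ut a b p : bracket (Umap w a) (Utmap t w b) p = Smap t w a b p.
Proof.
rewrite (bracketE (dderiv_U a) (dderiv_Ut b)); unfold_maps.
- by apply: (eq_modulo (1/2) (t_skew13 a p.1 b)); expand_tw; lmod_field.
- expand_tw; rewrite (wC a (t p.1 b p.1)) (w_t_xzz a p.1 b) (w_t_sandwich a p.1 b).
  by rewrite (w_t_zzx a p.1 b) (wC p.1 b) (wC b a); field.
Qed.

Lemma bracket_U_Kt a c d p :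
  bracket (Umap w a) (Ktmap t w c d) p = w c d *: Utmap t w a p.
Proof.
rewrite (bracketE (dderiv_U a) (dderiv_Kt c d)); unfold_maps.
- by rewrite (t_swap13 a p.1 p.1) (t_swap12' a p.1 p.1); expand_tw; lmod_field.
- expand_tw; rewrite (w_t_czz a p.1) -(w_cube p.1 a) (w_t_zzc a p.1).
  by rewrite (wC a (t p.1 p.1 p.1)); field.
Qed.

Lemma bracket_K_Ut a b c p : bracket (Kmap w a b) (Utmap t w c) p = w a b *: Umap w c p.
Proof.
rewrite (bracketE (dderiv_K a b) (dderiv_Ut c)); unfold_maps.
- by expand_tw; lmod_field.
- by expand_tw; field.
Qed.

Lemma bracket_K_Kt a b c d p :
  bracket (Kmap w a b) (Ktmap t w c d) p = w a b *: (Smap t w c d p - Smap t w d c p).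
Proof.
rewrite (bracketE (dderiv_K a b) (dderiv_Kt c d)); unfold_maps.
- by rewrite /= (t_swap12 c d p.1); expand_tw; lmod_field.
- by rewrite /=; expand_tw; rewrite (wC d c); field.
Qed.

Lemma bracket_Ut_Ut a b p : bracket (Utmap t w a) (Utmap t w b) p = Ktmap t w a b p.
Proof.
rewrite (bracketE (dderiv_Ut a) (dderiv_Ut b)); unfold_maps; set z := p.1.
- have e1 := t_skew13 (t z b z) z a; rewrite -(w_cube z b) in e1.
  have e2 := t_skew13 (t z a z) z b; rewrite -(w_cube z a) in e2.
  have e3 := congr1 (fun u => t z u z) (t_skew13 a b z); rewrite /= in e3; expand_tw_in e3.
  apply: (eq_modulo (-1/12) e1); apply: (eq_modulo (1/12) e2).
  apply: (eq_modulo (1/6) (t_derivation z a z b z)).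
  apply: (eq_modulo (-1/6) (t_derivation z b z a z)); apply: (eq_modulo (-1/6) e3).
  apply: (eq_modulo (- p.2 / 4) (t_skew12 a b z)).
  apply: (eq_modulo (- p.2 / 4) (t_skew12 a z b)).
  apply: (eq_modulo (p.2 / 4) (t_skew12 b z a)).
  apply: (eq_modulo (- p.2 / 4) (t_skew13 a b z)).
  by expand_tw; lmod_field.
- expand_tw.
  rewrite (w_t_xzz (t z b z) z a) (w_t_sandwich (t z b z) z a) (w_t_zzx (t z b z) z a).
  rewrite (w_t_xzz (t z a z) z b) (w_t_sandwich (t z a z) z b) (w_t_zzx (t z a z) z b).
  rewrite (w_t_xzz b z a) (w_t_xzz a z b) (w_t_zzx b z a) (w_t_zzx a z b).
  rewrite (wC a (t z b z)) (wC b (t z a z)) (w_t_sandwich a z b) (wC (t z b z) (t z a z)).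
  rewrite -(w_cube z b) -(w_cube z a) (wC z a) (wC z b) (wC b a).
  by apply: (eqr_modulo (-1/12) (w_t_zaz_zbz z a b)); field.
Qed.

Lemma bracket_Kt_Kt a b c d p : bracket (Ktmap t w a b) (Ktmap t w c d) p = 0.
Proof.
rewrite (bracketE (dderiv_Kt a b) (dderiv_Kt c d)); unfold_maps.
- by expand_tw; lmod_field.
- by expand_tw; field.
Qed.

Lemma bracket_Kt_Ut a b c p : bracket (Ktmap t w a b) (Utmap t w c) p = 0.
Proof.
rewrite (bracketE (dderiv_Kt a b) (dderiv_Ut c)); unfold_maps; set z := p.1.
- expand_tw; rewrite (t_swap13 (t z c z) z z) (t_swap12' (t z c z) z z) (t_swap13 c z z).
  rewrite (t_swap12' c z z) (t_swap13' (t z z z) c z); expand_tw.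
  by rewrite t_zc_cube t_z_zcz_z -(w_cube z c); expand_tw; lmod_field.
- expand_tw; rewrite (w_t_czz (t z c z) z) (w_t_czz c z) -(w_cube z (t z c z)).
  rewrite -(w_cube z c) (w_t_zzc (t z c z) z) (w_t_zzc c z) (w_t_xzz (t z z z) z c).
  rewrite (w_t_sandwich (t z z z) z c) (w_t_zzx (t z z z) z c).
  by rewrite (wC (t z c z) (t z z z)) w_cube_tzcz (wC c (t z z z)) (wC z c); field.
Qed.

Lemma bracket_K_K a b c d p : bracket (Kmap w a b) (Kmap w c d) p = 0.
Proof. by rewrite (bracketE (dderiv_K a b) (dderiv_K c d)) /dK subrr. Qed.

Lemma bracket_K_U a b c p : bracket (Kmap w a b) (Umap w c) p = 0.
Proof.
rewrite (bracketE (dderiv_K a b) (dderiv_U c)); unfold_maps.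
- by expand_tw; lmod_field.
- by expand_tw; field.
Qed.

Lemma inspan_ext f g : inspan t w f -> f =1 g -> inspan t w g.
Proof. by move=> Hf /functional_extensionality <-. Qed.

Lemma inspan_scale (a : k) f : inspan t w f -> inspan t w (fun p => a *: f p).
Proof. by move=> Hf; apply: (inspan_ext (spanLC a Hf (span0 t w))) => p; rewrite addr0. Qed.

Lemma inspan_add f g : inspan t w f -> inspan t w g -> inspan t w (fun p => f p + g p).
Proof. by move=> Hf Hg; apply: (inspan_ext (spanLC 1 Hf Hg)) => p; rewrite scale1r. Qed.

Lemma inspan_sub f g : inspan t w f -> inspan t w g -> inspan t w (fun p => f p - g p).
Proof.
by move=> Hf Hg; apply: (inspan_ext (spanLC (-1) Hg Hf)) => p; rewrite scaleN1r addrC.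
Qed.

Lemma inspan_K a b : inspan t w (Kmap w a b).
Proof. by apply: spanG; left; exists a, b. Qed.
Lemma inspan_U a : inspan t w (Umap w a).
Proof. by apply: spanG; right; left; exists a. Qed.
Lemma inspan_S a b : inspan t w (Smap t w a b).
Proof. by apply: spanG; right; right; left; exists a, b. Qed.
Lemma inspan_Ut a : inspan t w (Utmap t w a).
Proof. by apply: spanG; right; right; right; left; exists a. Qed.
Lemma inspan_Kt a b : inspan t w (Ktmap t w a b).
Proof. by apply: spanG; right; right; right; right; exists a, b. Qed.

Lemma inspan_bracket_rel f g h :
  (forall p, bracket f g p = h p) -> inspan t w h -> inspan t w (bracket f g).
Proof. by move=> Efg Hh; apply: (inspan_ext Hh) => p; rewrite Efg. Qed.

Lemma inspan_bracket_rel_rev f g h :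
  (forall p, bracket g f p = h p) -> inspan t w h -> inspan t w (bracket f g).
Proof.
move=> Egf Hh; apply: (inspan_ext (inspan_sub (span0 t w) Hh)) => p.
by rewrite -Egf /bracket sub0r opprB.
Qed.

Ltac inspan_combination := repeat first
  [ exact: inspan_K | exact: inspan_U | exact: inspan_S | exact: inspan_Ut
  | exact: inspan_Kt | exact: span0 | apply: inspan_scale | apply: inspan_sub
  | apply: inspan_add ].

Lemma inspan_bracket_generator f g :
  generator t w f -> generator t w g -> inspan t w (bracket f g).
Proof.
case=> [[a [b ->]]|[[a ->]|[[a [b ->]]|[[a ->]|[a [b ->]]]]]];
case=> [[c [d ->]]|[[c ->]|[[c [d ->]]|[[c ->]|[c [d ->]]]]]].
- by apply: inspan_bracket_rel (bracket_K_K a b c d) _; inspan_combination.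
- by apply: inspan_bracket_rel (bracket_K_U a b c) _; inspan_combination.
- by apply: inspan_bracket_rel_rev (bracket_S_K c d a b) _; inspan_combination.
- by apply: inspan_bracket_rel (bracket_K_Ut a b c) _; inspan_combination.
- by apply: inspan_bracket_rel (bracket_K_Kt a b c d) _; inspan_combination.
- by apply: inspan_bracket_rel_rev (bracket_K_U c d a) _; inspan_combination.
- by apply: inspan_bracket_rel (bracket_U_U a c) _; inspan_combination.
- by apply: inspan_bracket_rel_rev (bracket_S_U c d a) _; inspan_combination.
- by apply: inspan_bracket_rel (bracket_U_Ut a c) _; inspan_combination.
- by apply: inspan_bracket_rel (bracket_U_Kt a c d) _; inspan_combination.
- by apply: inspan_bracket_rel (bracket_S_K a b c d) _; inspan_combination.
- by apply: inspan_bracket_rel (bracket_S_U a b c) _; inspan_combination.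
- by apply: inspan_bracket_rel (bracket_S_S a b c d) _; inspan_combination.
- by apply: inspan_bracket_rel (bracket_S_Ut a b c) _; inspan_combination.
- by apply: inspan_bracket_rel (bracket_S_Kt a b c d) _; inspan_combination.
- by apply: inspan_bracket_rel_rev (bracket_K_Ut c d a) _; inspan_combination.
- by apply: inspan_bracket_rel_rev (bracket_U_Ut c a) _; inspan_combination.
- by apply: inspan_bracket_rel_rev (bracket_S_Ut c d a) _; inspan_combination.
- by apply: inspan_bracket_rel (bracket_Ut_Ut a c) _; inspan_combination.
- by apply: inspan_bracket_rel_rev (bracket_Kt_Ut c d a) _; inspan_combination.
- by apply: inspan_bracket_rel_rev (bracket_K_Kt c d a b) _; inspan_combination.
- by apply: inspan_bracket_rel_rev (bracket_U_Kt c a b) _; inspan_combination.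
- by apply: inspan_bracket_rel_rev (bracket_S_Kt c d a b) _; inspan_combination.
- by apply: inspan_bracket_rel (bracket_Kt_Ut a b c) _; inspan_combination.
- by apply: inspan_bracket_rel (bracket_Kt_Kt a b c d) _; inspan_combination.
Qed.

Lemma inspan_bracket f g : inspan t w f -> inspan t w g -> inspan t w (bracket f g).
Proof.
move=> Hf; elim: Hf g => [|f0 Hf0|a f1 f2 Hf1 IHf1 Hf2 IHf2] g Hg.
- by apply: (inspan_ext (span0 t w)) => p; rewrite bracket0l //; apply: twice_diff_span.
- elim: Hg => [|g0 Hg0|b g1 g2 Hg1 IHg1 Hg2 IHg2].
  + by apply: (inspan_ext (span0 t w)) => p; rewrite bracket0r //; apply: twice_diff_generator.
  + exact: inspan_bracket_generator.
  + apply: (inspan_ext (spanLC b IHg1 IHg2)) => p.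
    rewrite bracket_linr //; by [apply: twice_diff_span | apply: twice_diff_generator].
- apply: (inspan_ext (spanLC a (IHf1 g Hg) (IHf2 g Hg))) => p.
  by rewrite bracket_linl //; apply: twice_diff_span.
Qed.

End FTS.

Unset Implicit Arguments.

Theorem mainTheorem10 (k : numFieldType) (F : vectType k)
    (t : F -> F -> F -> F) (w : F -> F -> k) :
  is_FTS t w ->
  ((forall f g, inspan t w f -> inspan t w g -> inspan t w (bracket f g)) /\
   (forall (a : k) f g h, inspan t w f -> inspan t w g -> inspan t w h ->
      forall p, bracket (fun q => a *: f q + g q) h p
                = a *: bracket f h p + bracket g h p) /\
   (forall (a : k) f g h, inspan t w f -> inspan t w g -> inspan t w h ->
      forall p, bracket h (fun q => a *: f q + g q) p
                = a *: bracket h f p + bracket h g p) /\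
   (forall f, inspan t w f -> forall p, bracket f f p = 0) /\
   (forall f g h, inspan t w f -> inspan t w g -> inspan t w h ->
      forall p, bracket f (bracket g h) p + bracket g (bracket h f) p
                + bracket h (bracket f g) p = 0)) /\
  (forall a b c d p, bracket (Smap t w a b) (Smap t w c d) p
       = Smap t w (t a b c) d p + Smap t w c (t b a d) p) /\
  (forall a b c p, bracket (Smap t w a b) (Umap w c) p = Umap w (t a b c) p) /\
  (forall a b c d p, bracket (Smap t w a b) (Kmap w c d) p
       = w c d *: Kmap w b a p) /\
  (forall a b p, bracket (Umap w a) (Umap w b) p = Kmap w a b p) /\
  (forall a b c p, bracket (Smap t w a b) (Utmap t w c) p = Utmap t w (t b a c) p) /\
  (forall a b c d p, bracket (Smap t w a b) (Ktmap t w c d) p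
       = w c d *: Ktmap t w a b p) /\
  (forall a b p, bracket (Umap w a) (Utmap t w b) p = Smap t w a b p) /\
  (forall a c d p, bracket (Umap w a) (Ktmap t w c d) p = w c d *: Utmap t w a p) /\
  (forall a b c p, bracket (Kmap w a b) (Utmap t w c) p = w a b *: Umap w c p) /\
  (forall a b c d p, bracket (Kmap w a b) (Ktmap t w c d) p
       = w a b *: (Smap t w c d p - Smap t w d c p)) /\
  (forall a b p, bracket (Utmap t w a) (Utmap t w b) p = Ktmap t w a b p) /\
  (forall a b c d p, bracket (Ktmap t w a b) (Ktmap t w c d) p = 0) /\
  (forall a b c p, bracket (Ktmap t w a b) (Utmap t w c) p = 0).
Proof.
move=> FTS; have D2 := twice_diff_span FTS.
split.
  split; first exact: inspan_bracket FTS.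
  split; first by move=> a f g h /D2 Hf /D2 Hg /D2 Hh; exact: bracket_linl.
  split; first by move=> a f g h /D2 Hf /D2 Hg /D2 Hh; exact: bracket_linr.
  split; first by move=> f _ p; rewrite /bracket subrr.
  by move=> f g h /D2 Hf /D2 Hg /D2 Hh; exact: bracket_jacobi.
split; first exact: bracket_S_S FTS.
split; first exact: bracket_S_U FTS.
split; first exact: bracket_S_K FTS.
split; first exact: bracket_U_U FTS.
split; first exact: bracket_S_Ut FTS.
split; first exact: bracket_S_Kt FTS.
split; first exact: bracket_U_Ut FTS.
split; first exact: bracket_U_Kt FTS.
split; first exact: bracket_K_Ut FTS.
split; first exact: bracket_K_Kt FTS.
split; first exact: bracket_Ut_Ut FTS.
split; first exact: bracket_Kt_Kt FTS.
exact: bracket_Kt_Ut FTS.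
Qed.
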